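(* Let $n\le -1$ be an odd integer. In $\mathbb{F}_3[v]$, the irreducible polynomial $a=v^2+v-1$ divides the reduction of $g_n$ if and only if $n\equiv 1\pmod 4$; moreover $a^2$ never divides the reduction of $g_n$.
   Context: Let $a=v^2+v-1$ and $B=(v^2-1)(v^2-v-1)$. For odd $n\le -1$ with $k=(1-n)/2$, define $g_n$ by $g_n=\big[(a+b)^k-(a-b)^k-(a+b)^{k+2}+(a-b)^{k+2}\big]/b$, where $b$ is a formal square root of $B$; the expression is a polynomial in $a$ and $b^2=B$, hence $g_n\in\mathbb{Z}[v]$. *)

From HB Require Import structures.
From mathcomp Require Import all_boot all_order all_algebra.
Set Implicit Arguments. Unset Strict Implicit. Unset Printing Implicit Defensive.
Import Order.TTheory GRing.Theory Num.Theory.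
Local Open Scope ring_scope.

Definition a_poly : {poly int} := 'X^2 + 'X - 1.
Definition B_poly : {poly int} := ('X^2 - 1) * ('X^2 - 'X - 1).

(* Elements x + y*b of Z[v][b]/(b^2 - B), represented as pairs (x, y). *)
Definition qelt := ({poly int} * {poly int})%type.
Definition qadd (p q : qelt) : qelt := (p.1 + q.1, p.2 + q.2).
Definition qopp (p : qelt) : qelt := (- p.1, - p.2).
Definition qmul (p q : qelt) : qelt :=
  (p.1 * q.1 + p.2 * q.2 * B_poly, p.1 * q.2 + p.2 * q.1).
Fixpoint qpow (u : qelt) (m : nat) : qelt :=
  match m with 0%N => (1, 0) | m'.+1 => qmul (qpow u m') u end.

Definition a_plus_b : qelt := (a_poly, 1).
Definition a_minus_b : qelt := (a_poly, -1).

Definition kk (n : int) : nat := ((absz (1 - n)) %/ 2)%N.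

(* numerator (a+b)^k - (a-b)^k - (a+b)^(k+2) + (a-b)^(k+2), an element of the
   form 0 + y*b; g_n is y, i.e. the numerator divided by b. *)
Definition g_numer (n : int) : qelt :=
  let k := kk n in
  qadd (qadd (qadd (qpow a_plus_b k) (qopp (qpow a_minus_b k)))
             (qopp (qpow a_plus_b k.+2)))
       (qpow a_minus_b k.+2).
Definition g (n : int) : {poly int} := (g_numer n).2.

Definition red3 (p : {poly int}) : {poly 'F_3} := map_poly (fun z : int => z%:~R) p.

From HB Require Import structures.
From mathcomp Require Import all_boot all_order all_algebra ring zify.
Import Order.TTheory GRing.Theory Num.Theory.
Set Implicit Arguments. Unset Strict Implicit. Unset Printing Implicit Defensive.
Local Open Scope ring_scope.

(* Write (a + b)^m = x_m + y_m b in R[b]/(b^2 - B).  Since (a - b)^m is the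
   conjugate x_m - y_m b, the numerator defining g_n has b-coefficient
   2 (y_k - y_(k+2)), so over F_3 (where 2 = -1) the reduction of g_n is
   y_(k+2) - y_k, with k = (1 - n)/2.
   Expanding (a + b)^m binomially modulo a^2 gives, over any commutative ring,
     (a + b)^(2j+2) = (B^(j+1), 2(j+1) a B^j)   mod a^2,
     y_(2j+1) = B^j                            mod a,
   hence y_(2j+3) - y_(2j+1) = B^j (B - 1) mod a and
   y_(2j+4) - y_(2j+2) = 2 a B^j ((j+2) B - (j+1)) mod a^2.
   Over F_3, a = v^2 + v - 1 has no root, hence is irreducible, and the
   factors B, B - 1, 2 and (j+2) B - (j+1) all have a nonzero residue of
   degree at most one modulo a, so they are coprime to a.  Thus a never
   divides the difference for odd k, and divides it exactly once for even k;
   finally k is odd exactly when n = 1 - 2k is 3 modulo 4.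
   The file first develops the expansion over an arbitrary commutative ring,
   then transfers it to g_n through the reduction morphism Z[v] -> F_3[v],
   then does the F_3 arithmetic; the theorem combines these by parity of k. *)

Section QuadraticPowers.
Variables (R : comPzRingType) (B : R).

Definition qmulB (p q : R * R) : R * R :=
  (p.1 * q.1 + p.2 * q.2 * B, p.1 * q.2 + p.2 * q.1).

Fixpoint qpowB (u : R * R) (m : nat) : R * R :=
  if m is m'.+1 then qmulB (qpowB u m') u else (1, 0).

(* One-step unfolding, without letting simplification unfold further. *)
Lemma qpowB_S u m : qpowB u m.+1 = qmulB (qpowB u m) u.
Proof. by []. Qed.

Lemma qpowB_conj (x c : R) m :
  qpowB (x, - c) m = ((qpowB (x, c) m).1, - (qpowB (x, c) m).2).
Proof.
elim: m => [|m IH] /=; first by rewrite oppr0.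
by rewrite IH /qmulB /=; congr pair; ring.
Qed.

Variable A : R.

Definition ycoef (m : nat) : R := (qpowB (A, 1) m).2.

Lemma qpowB_even j : exists c d,
  qpowB (A, 1) (2 * j).+2 =
  (B ^+ j.+1 + A ^+ 2 * c, (2 * j.+1)%:R * A * B ^+ j + A ^+ 2 * d).
Proof.
elim: j => [|j [c [d IH]]].
  by exists 1, 0; rewrite /= /qmulB /=; congr pair; ring.
set N : R := (2 * j.+1)%:R.
exists (B ^+ j.+1 + c * (A ^+ 2 + B) + N * B ^+ j.+1 *+ 2 + A * B * d *+ 2).
exists (A * c *+ 2 + N * A * B ^+ j + d * (A ^+ 2 + B)).
rewrite mulnS /= -/(qpowB _ (2 * j).+2) IH /qmulB /= /N.
by congr pair; rewrite !mulnS !exprS; ring.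
Qed.

Lemma ycoef_odd j : exists e, ycoef (2 * j).+1 = B ^+ j + A * e.
Proof.
case: j => [|j]; first by exists 0; rewrite /ycoef /= /qmulB /=; ring.
have [c [d E]] := qpowB_even j.
rewrite /ycoef (_ : (2 * j.+1).+1 = (2 * j).+3) ?mulnS // qpowB_S E /=.
by exists (A * c + (2 * j.+1)%:R * A * B ^+ j + A ^+ 2 * d); rewrite !exprS; ring.
Qed.

(* y_(m+2) - y_m: up to the factor -2 this is the b-coefficient defining g. *)
Definition ydiff (m : nat) : R := ycoef m.+2 - ycoef m.

Lemma ydiff_odd j : exists e, ydiff (2 * j).+1 = B ^+ j * (B - 1) + A * e.
Proof.
rewrite /ydiff.
have [e1 E1] := ycoef_odd j; have [e2 E2] := ycoef_odd j.+1.
have -> : (2 * j).+3 = (2 * j.+1).+1 by rewrite mulnS.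
rewrite E1 E2; exists (e2 - e1); rewrite exprS; ring.
Qed.

Lemma ydiff_even j : exists e,
  ydiff (2 * j).+2 = A * (2 * B ^+ j * ((j.+2)%:R * B - (j.+1)%:R)) + A ^+ 2 * e.
Proof.
rewrite /ydiff.
have [c1 [d1 E1]] := qpowB_even j; have [c2 [d2 E2]] := qpowB_even j.+1.
have -> : (2 * j).+4 = (2 * j.+1).+2 by rewrite mulnS.
rewrite /ycoef E1 E2 /=.
by exists (d2 - d1); rewrite !mulnS exprS; ring.
Qed.
End QuadraticPowers.

Lemma qpowB_rmorph (R S : comPzRingType) (f : {rmorphism R -> S}) (B : R) u m :
  (f (qpowB B u m).1, f (qpowB B u m).2) = qpowB (f B) (f u.1, f u.2) m.
Proof.
elim: m => [|m IH] /=; first by rewrite rmorph1 rmorph0.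
by rewrite -IH /qmulB /= !(rmorphD, rmorphM).
Qed.

Lemma qpow_qpowB u m : qpow u m = qpowB B_poly u m.
Proof. by elim: m => //= m ->. Qed.

Lemma g_ycoef n :
  g n = 2 * (ycoef B_poly a_poly (kk n) - ycoef B_poly a_poly (kk n).+2).
Proof.
by rewrite /g /g_numer /a_plus_b /a_minus_b /= !qpow_qpowB !qpowB_conj /ycoef /=; ring.
Qed.

Local Notation F := {poly 'F_3}.
Local Notation AF := (red3 a_poly).
Local Notation BF := (red3 B_poly).

Lemma red3_ycoef m : red3 (ycoef B_poly a_poly m) = ycoef BF AF m.
Proof.
pose red : {rmorphism {poly int} -> F} := map_poly (fun z : int => z%:~R).
have := qpowB_rmorph red B_poly (a_poly, 1) m.
by rewrite /ycoef /red3 /= rmorph1 => <-.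
Qed.

(* F_3[v] has characteristic 3; equalities are proved up to multiples of 3. *)
Lemma char3 : (3%:R : F) = 0.
Proof. by rewrite -polyC_natr (_ : 3%:R = 0 :> 'F_3) ?polyC0 //; apply/eqP. Qed.

Lemma eq_mod3 (p q t : F) : p = q + 3%:R * t -> p = q.
Proof. by rewrite char3 mul0r addr0. Qed.

Lemma two_eq_opp (p : F) : 2 * p = - p.
Proof. by apply: (@eq_mod3 _ _ p); ring. Qed.

Lemma AF_E : AF = 'X^2 + 'X - 1.
Proof. by rewrite /red3 /a_poly rmorphB rmorphD /= map_polyXn map_polyX rmorph1. Qed.

Lemma BF_E : BF = ('X^2 - 1) * ('X^2 - 'X - 1).
Proof. by rewrite /red3 /B_poly rmorphM !rmorphB /= map_polyXn map_polyX rmorph1. Qed.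

Lemma size_AF : size AF = 3.
Proof. by rewrite AF_E -addrA size_polyDl ?size_polyXn // -polyC1 size_XsubC. Qed.

(* a = v^2 + v - 1 has no root in F_3, hence is irreducible. *)
Lemma AF_irreducible : irreducible_poly AF.
Proof.
apply: cubic_irreducible => [|x]; first by rewrite size_AF.
by rewrite AF_E rootE !hornerE; case: x => [[|[|[|?]]] ?].
Qed.

Lemma coprime_irreducible_residue (K : fieldType) (p q r : {poly K}) :
  irreducible_poly p -> r != 0 -> (size r < size p)%N -> coprimep p (q * p + r).
Proof.
move=> irr_p nz_r small_r; rewrite coprimep_addl_mul (irreducible_poly_coprime r irr_p).
by apply/negP => /(dvdp_leq nz_r); rewrite leqNgt small_r.
Qed.

Lemma coprime_AF_linear (q : F) (c d : 'F_3) :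
  (c != 0) || (d != 0) -> coprimep AF (q * AF + (c%:P * 'X + d%:P)).
Proof.
move=> cd_nz; apply: coprime_irreducible_residue AF_irreducible _ _.
  rewrite -size_poly_eq0 size_MXaddC polyC_eq0.
  by case: ifP cd_nz => // /andP[/eqP-> /eqP->].
rewrite size_MXaddC size_AF; case: ifP => // _.
by rewrite !ltnS size_polyC leq_b1.
Qed.

Definition QF : F := 'X^2 + 'X + 1.

Lemma BF_residue : BF = QF * AF + (1%:P * 'X + (-1)%:P).
Proof.
apply: (@eq_mod3 _ _ (1 - 'X^2 - 'X^3)).
by rewrite BF_E AF_E /QF polyCN polyC1; ring.
Qed.

(* The factors appearing in ydiff_odd and ydiff_even are coprime to a:
   their residues modulo a are v - 1, v + 1, 2 and (j+2) v + j. *)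
Lemma coprime_AF_BF : coprimep AF BF.
Proof. by rewrite BF_residue coprime_AF_linear. Qed.

Lemma coprime_AF_BF1 : coprimep AF (BF - 1).
Proof.
have -> : BF - 1 = QF * AF + (1%:P * 'X + 1%:P).
  by apply: (@eq_mod3 _ _ (-1)); rewrite BF_residue polyCN polyC1; ring.
by rewrite coprime_AF_linear.
Qed.

Lemma coprime_AF_2 : coprimep AF 2.
Proof.
have -> : 2 = 0 * AF + (0%:P * 'X + 2%:P) :> F.
  by rewrite polyC0 !mul0r !add0r polyC_natr.
by rewrite coprime_AF_linear.
Qed.

Lemma coprime_AF_lin_BF j : coprimep AF ((j.+2)%:R * BF - (j.+1)%:R).
Proof.
have -> : (j.+2)%:R * BF - (j.+1)%:R =
          ((j.+2)%:R * QF) * AF + ((j.+2)%:R%:P * 'X + j%:R%:P).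
  apply: (@eq_mod3 _ _ (- (j.+1)%:R)).
  by rewrite BF_residue !polyC_natr polyCN polyC1; ring.
apply: coprime_AF_linear.
have -> : (j.+2)%:R = j%:R + 2 :> 'F_3 by rewrite -(addn2 j) natrD.
by case: (eqVneq (j%:R : 'F_3) 0) => [->|_]; rewrite ?add0r ?orbT.
Qed.

(* Since 2 = -1 in F_3, the reduction of g_n is y_(k+2) - y_k. *)
Lemma red3_g n : red3 (g n) = ydiff BF AF (kk n).
Proof.
rewrite g_ycoef /ydiff -!red3_ycoef.
move: (ycoef B_poly a_poly (kk n)) (ycoef B_poly a_poly (kk n).+2) => y0 y2.
by rewrite /red3 rmorphM rmorphB rmorph_nat two_eq_opp opprB.
Qed.

Lemma ndvd_AF_of_coprime p : coprimep AF p -> ~~ (AF %| p).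
Proof. by rewrite (irreducible_poly_coprime p AF_irreducible). Qed.

Lemma AF_odd_step j : ~~ (AF %| ydiff BF AF (2 * j).+1).
Proof.
have [e ->] := ydiff_odd BF AF j.
rewrite dvdp_addl ?dvdp_mulIl // ndvd_AF_of_coprime //.
by rewrite coprimepMr coprime_AF_BF1 andbT coprimep_expr ?coprime_AF_BF.
Qed.

Lemma AF_even_step j :
  AF %| ydiff BF AF (2 * j).+2 /\ ~~ (AF ^+ 2 %| ydiff BF AF (2 * j).+2).
Proof.
have [e ->] := ydiff_even BF AF j.
rewrite expr2 -(mulrA AF AF e) -mulrDr; split; first exact: dvdp_mulIl.
have AF_nz : AF != 0 by rewrite -size_poly_eq0 size_AF.
rewrite dvdp_mul2l // dvdp_addl ?dvdp_mulIl // ndvd_AF_of_coprime //.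
by rewrite !coprimepMr coprime_AF_2 coprime_AF_lin_BF andbT coprimep_expr ?coprime_AF_BF.
Qed.

Lemma kk_odd_neg n : n <= -1 -> odd `|n| -> n = 1 - 2 * (kk n)%:Z.
Proof. by rewrite /kk; lia. Qed.

Theorem lemma5p6 (n : int) (hn : n <= -1) (hodd : odd (absz n)) :
  (red3 a_poly %| red3 (g n)) = (n %% 4 == 1)%Z
  /\ ~~ (red3 a_poly ^+ 2 %| red3 (g n)).
Proof.
have n_eq := kk_odd_neg hn hodd.
have -> : (n %% 4 == 1)%Z = ~~ odd (kk n) by move: n_eq; lia.
rewrite red3_g; have k_pos : (0 < kk n)%N by move: n_eq hn; lia.
have [j [->|->]] : exists j, kk n = (2 * j).+1 \/ kk n = (2 * j).+2.
  by exists (kk n).-1./2; lia.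
- rewrite (_ : odd (2 * j).+1); last by lia.
  split; first exact/negbTE/AF_odd_step.
  by apply: contra (AF_odd_step j); apply/dvdp_trans; rewrite expr2 dvdp_mulIl.
- by rewrite (_ : ~~ odd (2 * j).+2); [apply: AF_even_step | lia].
Qed.
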